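(* (i) $\mathbf A_0^1=\mathbb M_{\tau_1}(a^+b^+)=\mathbb M_\lambda(a^+b^+)$, and this variety is defined by the identities $xtsx\approx xtxsx$ and $(xy)^2\approx(yx)^2$. (ii) $\mathbf A_0^1\vee\mathbb M_\lambda(ata^+)=\mathbb M_\lambda(ata^+b^+)$, and this variety is defined by the identities $xtx\approx xtx^2$, $xtysxy\approx xtysyx$, $xytxsy\approx yxtxsy$ and $xzxtxsx\approx xzxtsx$.
   Context: Words are elements of the free monoid $\mathfrak A^*$ over a countably infinite alphabet. $A_0=\langle e,f\mid e^2=e,\ f^2=f,\ fe=0\rangle=\{e,f,ef,0\}$, $A_0^1$ is $A_0$ with an identity adjoined, $\mathbf A_0^1$ the monoid variety it generates. Let $\tau_1$ be the congruence on $\mathfrak A^*$ generated by $a=aa$ for all letters $a$; $\mathbf u\,\lambda\,\mathbf v$ iff $\mathbf u\,\tau_1\,\mathbf v$, $\mathbf u,\mathbf v$ have the same set of letters occurring at least twice, and for each such letter its first two occurrences are adjacent in $\mathbf u$ iff adjacent in $\mathbf v$. For $\tau\in\{\tau_1,\lambda\}$, classes are ordered by $\mathtt v\le\mathtt u$ iff $\mathtt u=\mathtt p\mathtt v\mathtt s$ in $\mathfrak A^*/\tau$; for a set $\mathtt W$ of classes, $M_\tau(\mathtt W)$ is the Rees quotient of $\mathfrak A^*/\tau$ by the ideal of classes not $\le$ any element of $\mathtt W$, and $\mathbb M_\tau(\mathtt W)$ the monoid variety it generates. Notation: $\mathbb M_{\tau_1}(a^+b^+)$ uses the $\tau_1$-class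 $\{a^kb^m:k,m\ge1\}$; $\mathbb M_\lambda(a^+b^+)$ uses the $\lambda$-class $\{a^kb^m:k,m\ge2\}$; $ata^+$ is the $\lambda$-class $\{ata^k:k\ge1\}$; $ata^+b^+$ is the $\lambda$-class $\{ata^kb^m:k\ge1,m\ge2\}$. $\vee$ is the join of varieties. *)

From mathcomp Require Import all_boot.
Set Implicit Arguments. Unset Strict Implicit. Unset Printing Implicit Defensive.

(** Words: elements of the free monoid over the countably infinite alphabet nat. *)
Definition word := seq nat.
Definition identity := (word * word)%type.

(** A monoid presented as a setoid: carrier, equality (an equivalence),
    multiplication and identity.  Quotient monoids (Rees quotients of
    quotients of the free monoid) are represented this way. *)
Record mstruct := MStruct {
  car : Type;
  meq : car -> car -> Prop;
  mop : car -> car -> car;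
  mone : car }.

Definition is_monoid (N : mstruct) : Prop :=
  (forall x : car N, meq x x) /\
  (forall x y : car N, meq x y -> meq y x) /\
  (forall x y z : car N, meq x y -> meq y z -> meq x z) /\
  (forall x x' y y' : car N, meq x x' -> meq y y' -> meq (mop x y) (mop x' y')) /\
  (forall x y z : car N, meq (mop x (mop y z)) (mop (mop x y) z)) /\
  (forall x, meq (mop (mone N) x) x /\ meq (mop x (mone N)) x).

Definition eval (N : mstruct) (phi : nat -> car N) (w : word) : car N :=
  foldr (fun a acc => mop (phi a) acc) (mone N) w.

Definition sat (N : mstruct) (id : identity) : Prop :=
  forall phi : nat -> car N, meq (eval phi id.1) (eval phi id.2).

Definition in_var (M N : mstruct) : Prop :=
  forall id, sat M id -> sat N id.

Definition var_defined_by (M : mstruct) (Sigma : seq identity) : Prop :=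
  forall N, is_monoid N -> (in_var M N <-> (forall id, id \in Sigma -> sat N id)).

Definition same_var (M1 M2 : mstruct) : Prop :=
  forall id, sat M1 id <-> sat M2 id.

(** var M = var M1 \/ var M2 (join): Id(M) = Id(M1) \cap Id(M2). *)
Definition var_is_join (M M1 M2 : mstruct) : Prop :=
  forall id, sat M id <-> (sat M1 id /\ sat M2 id).

Inductive A01 := A1 | Ae | Af | Aef | A0.

Definition A01_mul (x y : A01) : A01 :=
  match x, y with
  | A1, _ => y
  | _, A1 => x
  | A0, _ => A0
  | _, A0 => A0
  | Ae, Ae => Ae
  | Ae, Af => Aef
  | Ae, Aef => Aef
  | Af, Ae => A0
  | Af, Af => Af
  | Af, Aef => A0
  | Aef, Ae => A0
  | Aef, Af => Aef
  | Aef, Aef => A0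
  end.

Definition A01M : mstruct := @MStruct A01 (@eq A01) A01_mul A1.

Inductive tau1 : word -> word -> Prop :=
  | tau1_refl u : tau1 u u
  | tau1_sym u v : tau1 u v -> tau1 v u
  | tau1_trans u v w : tau1 u v -> tau1 v w -> tau1 u w
  | tau1_step (p s : word) (a : nat) : tau1 (p ++ a :: s) (p ++ a :: a :: s).

(** the first two occurrences of the letter a in w are adjacent *)
Definition first2_adj (a : nat) (w : word) : bool :=
  nth a.+1 w (index a w).+1 == a.

Definition lam (u v : word) : Prop :=
  tau1 u v /\
  forall a : nat,
    (1 < count_mem a u <-> 1 < count_mem a v) /\
    (1 < count_mem a u -> (first2_adj a u <-> first2_adj a v)).

(** the tau-class of w is <= some class in W (W given as a set of words that
    is a union of tau-classes) *)
Definition nonzero (tau : word -> word -> Prop) (W : word -> Prop) (w : word) :=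
  exists u p s, W u /\ tau (p ++ w ++ s) u.

Definition Mtau (tau : word -> word -> Prop) (W : word -> Prop) : mstruct :=
  @MStruct word
    (fun x y => (~ nonzero tau W x /\ ~ nonzero tau W y)
                \/ (nonzero tau W x /\ nonzero tau W y /\ tau x y))
    cat [::].

Definition la := 0.
Definition lb := 1.
Definition lt := 2.

Definition W_apbp_tau1 (w : word) : Prop :=
  exists k m, 1 <= k /\ 1 <= m /\ w = nseq k la ++ nseq m lb.
Definition W_apbp_lam (w : word) : Prop :=
  exists k m, 2 <= k /\ 2 <= m /\ w = nseq k la ++ nseq m lb.
Definition W_ata (w : word) : Prop :=
  exists k, 1 <= k /\ w = [:: la; lt] ++ nseq k la.
Definition W_atab (w : word) : Prop :=
  exists k m, 1 <= k /\ 2 <= m /\ w = [:: la; lt] ++ nseq k la ++ nseq m lb.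

Definition vx := 0.
Definition vy := 1.
Definition vt := 2.
Definition vs := 3.
Definition vz := 4.

Definition Sigma1 : seq identity :=
  [:: ([:: vx; vt; vs; vx], [:: vx; vt; vx; vs; vx]);
      ([:: vx; vy; vx; vy], [:: vy; vx; vy; vx])].

Definition Sigma2 : seq identity :=
  [:: ([:: vx; vt; vx], [:: vx; vt; vx; vx]);
      ([:: vx; vt; vy; vs; vx; vy], [:: vx; vt; vy; vs; vy; vx]);
      ([:: vx; vy; vt; vx; vs; vy], [:: vy; vx; vt; vx; vs; vy]);
      ([:: vx; vz; vx; vt; vx; vs; vx], [:: vx; vz; vx; vt; vs; vx])].

From mathcomp Require Import all_boot zify.
Set Implicit Arguments. Unset Strict Implicit. Unset Printing Implicit Defensive.

(** Each monoid in the statement is finite, so it is given by an explicit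
    multiplication table; for the Rees quotients M_tau(W) the table is certified by
    representatives of the nonzero classes.  Satisfaction of an identity is then
    decidable, and the equalities and joins of varieties reduce to embeddings between
    the tables together with completeness of Sigma1 and Sigma2.

    Modulo Sigma1 every letter can be made to occur at
    most twice (modulo Sigma2: once or three times), and two adjacent letters may be
    swapped whenever both already occurred or both occur again.  Two words with the
    same occurrence counts that order every pair of occurrences such swaps cannot
    exchange in the same way are connected by swaps.  An identity of A_0^1 fixes the
    counts up to 2 and, substituting e for c and f for d, the order of the last c and
    the first d; for Sigma2 the identities of M_lambda(ata^+), substituting t for a
    letter z occurring once and a for a letter x occurring three times, also fix the
    order of z and the second x.  For such counts these are all the pairs that cannot
    be exchanged. *)

(** * Words *)

(** [simpl] first: [count_mem] terms whose element type is spelled [nat] or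
    [Equality.sort nat] are then the same atom for [lia]. *)
Ltac count_lia := simpl in *; lia.

Lemma count_mem_gt0 (x : nat) (s : word) : (0 < count_mem x s) = (x \in s).
Proof. by rewrite -has_count has_pred1. Qed.

Lemma cat_prefix_total (p1 s1 p2 s2 : word) : p1 ++ s1 = p2 ++ s2 ->
  (exists m, p2 = p1 ++ m) \/ (exists m, p1 = p2 ++ m).
Proof.
elim: p1 p2 => [|a p1 IH] [|b p2] /=; try by [left; exists (b :: p2) | right; exists (a :: p1)].
- by move=> _; left; exists [::].
- by case=> -> /IH [[m ->]|[m ->]]; [left|right]; exists m.
Qed.

Lemma cat_cancel_l (p s1 s2 : word) : p ++ s1 = p ++ s2 -> s1 = s2.
Proof. by elim: p => [|x p IH] //= [] /IH. Qed.

Lemma split_first (x : nat) (s : word) : x \in s ->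
  exists s1 s2, s = s1 ++ x :: s2 /\ x \notin s1.
Proof.
elim: s => [|a s IH] //; rewrite inE; case: (eqVneq x a) => [-> _|xa /= /IH].
  by exists [::], s.
case=> s1 [s2 [-> xs1]]; exists (a :: s1), s2; split => //.
by rewrite inE negb_or xa.
Qed.

Lemma mem_split (x : nat) (s : word) : x \in s -> exists s1 s2, s = s1 ++ x :: s2.
Proof. by case/split_first => s1 [s2 [-> _]]; exists s1, s2. Qed.

Lemma split_occ (x : nat) (w : word) (n : nat) : n < count_mem x w ->
  exists p q, w = p ++ x :: q /\ count_mem x p = n.
Proof.
elim: w n => [|a w IH] n //=; case: (eqVneq a x) => [->|ax] /=.
  case: n => [_|n]; first by exists [::], w.
  by rewrite add1n ltnS => /IH [p [q [-> <-]]]; exists (x :: p), q; rewrite /= eqxx.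
by rewrite add0n => /IH [p [q [-> <-]]]; exists (a :: p), q; rewrite /= (negbTE ax).
Qed.

Lemma split_twice (x : nat) (w : word) : 1 < count_mem x w ->
  exists p z t, w = p ++ x :: z ++ x :: t.
Proof.
case/(split_occ (n := 1)) => p [s [-> px]].
have: x \in p by rewrite -count_mem_gt0 px.
by case/mem_split=> p1 [z ->]; exists p1, z, s; rewrite -catA.
Qed.

(** * The congruences tau_1 and lambda *)

(** The canonical representative of the tau_1-class of [w]. *)
Fixpoint squash (w : word) : word :=
  if w is a :: w' then (if ohead (squash w') == Some a then squash w' else a :: squash w')
  else [::].

Lemma ohead_squash a s : ohead (squash (a :: s)) = Some a.
Proof. by rewrite /=; case: eqP. Qed.

Lemma squash_stutter p a s : squash (p ++ a :: s) = squash (p ++ a :: a :: s).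
Proof. by elim: p => [|b p /= ->] //=; rewrite ohead_squash eqxx. Qed.

Lemma squash_tau1 u v : tau1 u v -> squash u = squash v.
Proof. by elim=> // [w1 w2 w3 _ -> _ ->|p s a]; last exact: squash_stutter. Qed.

Lemma tau1_cons c u v : tau1 u v -> tau1 (c :: u) (c :: v).
Proof.
elim=> [w|w1 w2 _|w1 w2 w3 _ H1 _|p s a]; try by constructor.
- exact: tau1_trans.
- exact: (@tau1_step (c :: p) s a).
Qed.

Lemma tau1_squash u : tau1 u (squash u).
Proof.
elim: u => [|a w IH] /=; first exact: tau1_refl.
apply: tau1_trans (tau1_cons a IH) _; case: eqP => [|_]; last exact: tau1_refl.
case: (squash w) => [|b r] //= [<-]; exact: tau1_sym (@tau1_step [::] r b).
Qed.

Lemma tau1P u v : reflect (tau1 u v) (squash u == squash v).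
Proof.
apply: (iffP eqP) => [E|]; last exact: squash_tau1.
by apply: tau1_trans (tau1_squash u) _; rewrite E; apply: tau1_sym (tau1_squash v).
Qed.

Lemma tau1_catr u v s : tau1 u v -> tau1 (u ++ s) (v ++ s).
Proof.
elim=> [w|w1 w2 _|w1 w2 w3 _ H1 _|p s' a]; try by constructor.
- exact: tau1_trans.
- by rewrite -!catA; apply: tau1_step.
Qed.

Lemma tau1_cat p u v s : tau1 u v -> tau1 (p ++ u ++ s) (p ++ v ++ s).
Proof. by move=> H; elim: p => [|c p IH] /=; [exact: tau1_catr | exact: tau1_cons]. Qed.

Lemma tau1_mem x u v : tau1 u v -> (x \in u) = (x \in v).
Proof.
elim=> // [w1 w2 w3 _ -> _ -> //|p s a].
by rewrite !mem_cat !inE; case: (x == a).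
Qed.

Lemma tau1_head d u v : tau1 u v -> head d u = head d v.
Proof. by elim=> // [w1 w2 w3 _ -> _ -> //|[]]. Qed.

Lemma tau1_last d u v : tau1 u v -> last d u = last d v.
Proof. by elim=> // [w1 w2 w3 _ -> _ -> //|p s a]; rewrite !last_cat. Qed.

Lemma squash_nseq (p : word) (c : nat) e s : 0 < e ->
  squash (p ++ nseq e c ++ s) = squash (p ++ c :: s).
Proof.
case: e => [|e] // _; elim: e => [|e IH] //.
by rewrite -IH [nseq _ _ ++ _]/= -squash_stutter.
Qed.

Lemma squash_nil (y : word) : squash y = [::] -> y = [::].
Proof. by case: y => // a w; move: (ohead_squash a w); case: (squash (a :: w)). Qed.

Lemma squash_eq_cons (c : nat) (r y : word) : squash y = c :: r ->
  exists e y', [/\ 0 < e, y = nseq e c ++ y' & squash y' = r].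
Proof.
elim: y => [|a w IH] //=; case: eqP => [aw E|_ [-> <-]]; last by exists 1, w.
move: aw; rewrite E => -[ac]; subst c; have [e [y' [e0 -> <-]]] := IH E.
by exists e.+1, y'.
Qed.

Lemma squash_eq2 (y : word) (a b : nat) : squash y = [:: a; b] ->
  exists e1 e2, [/\ 0 < e1, 0 < e2 & y = nseq e1 a ++ nseq e2 b].
Proof.
case/squash_eq_cons=> e1 [y1 [e10 -> /squash_eq_cons [e2 [y2 [e20 -> /squash_nil ->]]]]].
by exists e1, e2; rewrite cats0.
Qed.

Lemma squash_eq3 (y : word) (a b c : nat) : squash y = [:: a; b; c] ->
  exists e1 e2 e3, [/\ 0 < e1, 0 < e2, 0 < e3 & y = nseq e1 a ++ nseq e2 b ++ nseq e3 c].
Proof.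
case/squash_eq_cons=> e1 [y1 [e10 -> /squash_eq2 [e2 [e3 [e20 e30 ->]]]]].
by exists e1, e2, e3.
Qed.

Lemma squash_eq4 (y : word) (a b c d : nat) : squash y = [:: a; b; c; d] ->
  exists e1 e2 e3 e4, [/\ 0 < e1, 0 < e2, 0 < e3, 0 < e4 &
     y = nseq e1 a ++ nseq e2 b ++ nseq e3 c ++ nseq e4 d].
Proof.
case/squash_eq_cons=> e1 [y1 [e10 -> /squash_eq3 [e2 [e3 [e4 [e20 e30 e40 ->]]]]]].
by exists e1, e2, e3, e4.
Qed.

Definition lamb (u v : word) : bool :=
  (squash u == squash v) &&
  all (fun a => ((1 < count_mem a u) == (1 < count_mem a v)) &&
                ((1 < count_mem a u) ==> (first2_adj a u == first2_adj a v))) (u ++ v).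

Lemma lamP u v : reflect (lam u v) (lamb u v).
Proof.
apply: (iffP andP) => [[/tau1P uv /allP adj]|[/tau1P uv adj]].
  split=> // a; case: (boolP (a \in u ++ v)) => [/adj /andP [/eqP E1 /implyP E2]|].
    by rewrite E1; split => // H; rewrite (eqP (E2 _)) // E1.
  by rewrite mem_cat negb_or => /andP [/count_memPn -> /count_memPn ->].
split=> //; apply/allP => a _; case: (adj a) => [[E1 E1'] E2]; apply/andP; split.
  by apply/eqP; apply/idP/idP.
by apply/implyP => /E2 [X Y]; apply/eqP; apply/idP/idP.
Qed.

Lemma lam_refl u : lam u u.
Proof. by split=> //; exact: tau1_refl. Qed.

Lemma lam_sym u v : lam u v -> lam v u.
Proof.
case=> uv adj; split=> [|a]; first exact: tau1_sym.
by case: (adj a) => [[E1 E1'] E2]; split=> // /E1' /E2 [].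
Qed.

Lemma lam_trans u v w : lam u v -> lam v w -> lam u w.
Proof.
case=> uv adj [vw adj']; split=> [|a]; first exact: tau1_trans vw.
case: (adj a) (adj' a) => [[E1 E1'] E2] [[F1 F1'] F2].
by split=> [|H]; [tauto | case: (E2 H) (F2 (E1 H)); tauto].
Qed.

Lemma first2_adj_cons_neq a c u : c != a -> first2_adj a (c :: u) = first2_adj a u.
Proof. by move=> H; rewrite /first2_adj /= (negbTE H). Qed.

Lemma first2_adj_cons_eq a u : first2_adj a (a :: u) = (head a.+1 u == a).
Proof. by rewrite /first2_adj /= eqxx; case: u. Qed.

Lemma first2_adj_split a p s : a \notin p -> first2_adj a (p ++ a :: s) = (head a.+1 s == a).
Proof.
elim: p => [_|c p IH]; first exact: first2_adj_cons_eq.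
by rewrite inE negb_or => /andP [ac ap]; rewrite /= first2_adj_cons_neq 1?eq_sym ?IH.
Qed.

Lemma first2_adj_rcons a u c :
  1 < count_mem a u -> first2_adj a (rcons u c) = first2_adj a u.
Proof.
move=> H; have: a \in u by rewrite -count_mem_gt0; apply: ltnW.
case/split_first=> p [s [E ap]]; move: H; rewrite {}E rcons_cat /= !first2_adj_split //.
by rewrite count_cat (count_memPn ap) /= eqxx; case: s.
Qed.

Lemma first2_adj_rcons_once a u :
  count_mem a u = 1 -> first2_adj a (rcons u a) = (last a.+1 u == a).
Proof.
move=> H; have: a \in u by rewrite -count_mem_gt0 H.
case/split_first=> p [s [E ap]]; move: H; rewrite {}E rcons_cat /= !first2_adj_split //.
rewrite last_cat /= count_cat (count_memPn ap) /= eqxx => -[/count_memPn as_].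
case: s as_ => [|x s] //= as_.
have xa : x != a by apply: contraNneq as_ => ->; rewrite mem_head.
rewrite (negbTE xa); apply/esym/negbTE; apply: contraNneq as_ => <-; exact: mem_last.
Qed.

Lemma lam_cons c u v : lam u v -> lam (c :: u) (c :: v).
Proof.
case=> uv adj; split=> [|a]; first exact: tau1_cons.
case: (adj a) => E1 E2; rewrite /= !(eq_sym c); case: (eqVneq a c) => [<-|ac] /=.
  rewrite !add1n !ltnS !count_mem_gt0 (tau1_mem a uv); split => // _.
  by rewrite !first2_adj_cons_eq (tau1_head _ uv).
by rewrite !add0n; split => // H; rewrite !first2_adj_cons_neq 1?eq_sym //; exact: E2.
Qed.

Lemma lam_rcons c u v : lam u v -> lam (rcons u c) (rcons v c).
Proof.
case=> uv adj; split=> [|a]; first by rewrite -!cats1; apply: tau1_catr.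
case: (adj a) => [[E1 E1'] E2]; rewrite -!cats1 !count_cat /= !addn0 !cats1.
case: (eqVneq c a) => [->|ca] /=; last first.
  by rewrite !addn0; split => // H; rewrite !first2_adj_rcons //; [exact: E2 | exact: E1].
rewrite !addn1 !ltnS !count_mem_gt0 (tau1_mem a uv); split => // av.
case: (boolP (1 < count_mem a u)) => u2; first by rewrite !first2_adj_rcons //; [exact: E2 | exact: E1].
have v2 : ~~ (1 < count_mem a v) by apply: contra u2 => /E1'.
rewrite !first2_adj_rcons_once ?(tau1_last _ uv) //; apply/eqP; rewrite eqn_leq leqNgt.
- by apply/andP; split; [exact: v2 | rewrite count_mem_gt0].
- by apply/andP; split; [exact: u2 | rewrite count_mem_gt0 (tau1_mem a uv)].
Qed.

Lemma lam_cat p u v s : lam u v -> lam (p ++ u ++ s) (p ++ v ++ s).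
Proof.
move=> H; elim: p => [|c p IH] /=; last exact: lam_cons.
elim/last_ind: s => [|s c IH]; first by rewrite !cats0.
by rewrite -!rcons_cat; apply: lam_rcons.
Qed.

Lemma lam_count (y u : word) (a : nat) : lam y u -> (1 < count_mem a y) = (1 < count_mem a u).
Proof. by case=> _ /(_ a) [[E E'] _]; apply/idP/idP. Qed.

Lemma lam_first2_adj (y u : word) (a : nat) : lam y u -> 1 < count_mem a u ->
  first2_adj a y = first2_adj a u.
Proof. by case=> _ /(_ a) [[_ E] F] /E /F [X Y]; apply/idP/idP. Qed.

Lemma first2_adj_nseq (a : nat) e s : 1 < e -> first2_adj a (nseq e a ++ s).
Proof. by case: e => [|[|e]] // _; rewrite /= first2_adj_cons_eq /= eqxx. Qed.

(** * Occurrence order and free swaps *)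

(** The [k]-th occurrence of [c] precedes the [j]-th occurrence of [d]
    (occurrences counted from 0). *)
Definition occ_before (w : word) (c k d j : nat) : Prop :=
  exists p s, w = p ++ s /\ k < count_mem c p /\ count_mem d p <= j.

Lemma occ_before_cons (a : nat) (w : word) (c k d j : nat) : occ_before w c k d j ->
  occ_before (a :: w) c (k + (a == c)) d (j + (a == d)).
Proof.
case=> p [s [-> [H1 H2]]]; exists (a :: p), s; split => //=.
by split; rewrite addnC; [rewrite ltn_add2l | rewrite leq_add2r].
Qed.

Lemma occ_before_total (w : word) (c k d j : nat) : c != d ->
  k < count_mem c w -> j < count_mem d w -> occ_before w c k d j \/ occ_before w d j c k.
Proof.
move=> cd; elim: w k j => [|a w IH] k j //=.
have dc : (d == c) = false by rewrite eq_sym (negbTE cd).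
case: (eqVneq a c) => [->|ac]; rewrite ?eqxx ?(negbTE cd) /=.
  case: k => [|k] Hk Hj; first by left; exists [:: c], w; rewrite /= eqxx (negbTE cd).
  by case: (IH k j _ Hj) => // /(occ_before_cons c); rewrite eqxx (negbTE cd) ?addn0 ?addn1;
    [left | right].
case: (eqVneq a d) => [->|ad]; rewrite ?eqxx ?(negbTE ac) /=.
  case: j => [|j] Hk Hj; first by right; exists [:: d], w; rewrite /= eqxx dc.
  by case: (IH k j Hk _) => // /(occ_before_cons d); rewrite eqxx dc ?addn0 ?addn1;
    [left | right].
by move=> Hk Hj; case: (IH k j Hk Hj) => /(occ_before_cons a);
  rewrite (negbTE ac) (negbTE ad) !addn0; [left | right].
Qed.

Lemma occ_before_asym (w : word) (c k d j : nat) :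
  occ_before w c k d j -> ~ occ_before w d j c k.
Proof.
case=> p1 [s1 [-> [H1 H2]]] [p2 [s2 [E [H3 H4]]]].
case: (cat_prefix_total E) => [] [m Em]; subst.
  by move: H4; rewrite count_cat; lia.
by move: H2; rewrite count_cat; lia.
Qed.

Lemma occ_before_neg (w : word) (c k d j : nat) : c != d ->
  k < count_mem c w -> j < count_mem d w -> (occ_before w c k d j <-> ~ occ_before w d j c k).
Proof.
move=> cd Hk Hj; split; first exact: occ_before_asym.
by case: (occ_before_total cd Hk Hj).
Qed.

(** The swaps that both [Sigma1] and [Sigma2] can perform. *)
Definition free_swap (w w' : word) : Prop :=
  exists p x y q, [/\ w = p ++ x :: y :: q, w' = p ++ y :: x :: q, x != y &
    (x \in p /\ y \in p) \/ (x \in q /\ y \in q)].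

Inductive free_swaps : word -> word -> Prop :=
  | free_swaps_refl w : free_swaps w w
  | free_swaps_step u v w : free_swap u v -> free_swaps v w -> free_swaps u w.

Lemma free_swaps_trans u v w : free_swaps u v -> free_swaps v w -> free_swaps u w.
Proof. by elim=> // a b c H _ IH /IH; exact: free_swaps_step. Qed.

Lemma free_swap_count (w w' : word) (e : nat) :
  free_swap w w' -> count_mem e w = count_mem e w'.
Proof. by case=> p [x [y [q [-> -> _ _]]]]; rewrite !count_cat /=; lia. Qed.

Lemma free_swaps_count (w w' : word) (e : nat) :
  free_swaps w w' -> count_mem e w = count_mem e w'.
Proof. by elim=> // a b c /(free_swap_count e) -> _. Qed.

(** The pair formed by the [k]-th [c] and the [j]-th [d] in [w] can be exchanged by a
    free swap. *)
Definition free_pair (w : word) (c k d j : nat) : bool :=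
  (c != d) && ((0 < k) && (0 < j) || (k.+1 < count_mem c w) && (j.+1 < count_mem d w)).

Lemma free_pair_count (w w' : word) (c k d j : nat) :
  (forall e, count_mem e w = count_mem e w') -> free_pair w c k d j = free_pair w' c k d j.
Proof. by move=> H; rewrite /free_pair !H. Qed.

Lemma not_free_pair (w : word) (c k d j : nat) : c != d -> ~~ free_pair w c k d j ->
  ~ (0 < k /\ 0 < j) /\ ~ (k.+1 < count_mem c w /\ j.+1 < count_mem d w).
Proof.
rewrite /free_pair => -> /=; rewrite negb_or => /andP [H1 H2].
by split => -[A B]; [move: H1 | move: H2]; rewrite A B.
Qed.

Lemma free_swap_pair (p : word) (x y : nat) (q : word) : x != y ->
  (x \in p /\ y \in p) \/ (x \in q /\ y \in q) ->
  free_pair (p ++ x :: y :: q) x (count_mem x p) y (count_mem y p).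
Proof.
move=> xy; rewrite /free_pair xy -!count_mem_gt0 => -[[H1 H2]|[H1 H2]] /=.
  by rewrite H1 H2.
have yx : (y == x) = false by rewrite eq_sym (negbTE xy).
by rewrite !count_cat /= !eqxx (negbTE xy) yx; apply/orP; right; apply/andP; split; count_lia.
Qed.

Lemma occ_before_swap (p : word) (x y : nat) (q : word) (c k d j : nat) : x != y ->
  occ_before (p ++ x :: y :: q) c k d j ->
  (c, k, d, j) != (x, count_mem x p, y, count_mem y p) ->
  occ_before (p ++ y :: x :: q) c k d j.
Proof.
move=> xy [p' [s [E [H1 H2]]]] Hne.
case: (cat_prefix_total E) => [[m Em]|[m Em]]; subst; last first.
  by exists p', (m ++ y :: x :: q); rewrite catA.
move: E; rewrite -catA => /esym/cat_cancel_l.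
case: m H1 H2 => [|x' [|y' m]] H1 H2 /=.
- by move=> _; exists p, (y :: x :: q); rewrite cats0 in H1 H2 *.
- case=> Ex _; subst x'; move: H1 H2; rewrite !count_cat /= !addn0 => H1 H2.
  case: (ltnP k (count_mem c p)) => Hk.
    by exists p, (y :: x :: q); split => //; split => //; count_lia.
  exists (p ++ [:: y; x]), q; rewrite -catA !count_cat /=; split=> //.
  have [cx|xc] := eqVneq x c; last by move: H1; rewrite (negbTE xc); count_lia.
  subst c; have kx : k = count_mem x p by move: H1; rewrite eqxx; count_lia.
  subst k; split; first by rewrite eq_sym (negbTE xy); count_lia.
  case: eqP => [yd|_]; last by move: H2; count_lia.
  subst d; have jy : j != count_mem y p by apply: contraNneq Hne => ->.
  have : count_mem y p < j by rewrite ltn_neqAle eq_sym jy; move: H2; count_lia.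
  by move: H2; rewrite (negbTE xy); count_lia.
- case=> Ex Ey Eq; subst x' y' q; exists (p ++ y :: x :: m), s; rewrite -catA; split => //.
  by move: H1 H2; rewrite !count_cat /=; count_lia.
Qed.

Lemma free_swap_occ_before (w w' : word) (c k d j : nat) : free_swap w w' ->
  ~~ free_pair w c k d j -> (occ_before w c k d j <-> occ_before w' c k d j).
Proof.
case=> p [x [y [q [-> -> xy Hm]]]] Hfree.
have Hm' : (y \in p /\ x \in p) \/ (y \in q /\ x \in q) by case: Hm => -[]; auto.
have yx : y != x by rewrite eq_sym.
have ww' e : count_mem e (p ++ x :: y :: q) = count_mem e (p ++ y :: x :: q).
  by rewrite !count_cat /=; lia.
split=> H; apply: (occ_before_swap _ H) => //;
  apply: contra Hfree => /eqP [-> -> -> ->].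
  exact: free_swap_pair.
by rewrite (free_pair_count _ _ _ _ ww'); exact: free_swap_pair.
Qed.

Lemma free_swaps_occ_before (w w' : word) (c k d j : nat) : free_swaps w w' ->
  ~~ free_pair w c k d j -> (occ_before w c k d j <-> occ_before w' c k d j).
Proof.
elim=> // u v {}w uv _ IH Hfree; rewrite (free_swap_occ_before uv Hfree); apply: IH.
by rewrite -(@free_pair_count u) // => e; apply: free_swap_count.
Qed.

Definition same_fixed_order (w1 w2 : word) : Prop :=
  forall c k d j : nat, c != d -> k < count_mem c w1 -> j < count_mem d w1 ->
    ~~ free_pair w1 c k d j -> (occ_before w1 c k d j <-> occ_before w2 c k d j).

Lemma free_swaps_bubble (pre : word) (d : nat) (p q : word) : d \notin p ->
  (forall p1 c p2, p = p1 ++ c :: p2 ->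
     free_pair (pre ++ p ++ d :: q) c (count_mem c (pre ++ p1)) d (count_mem d pre)) ->
  free_swaps (pre ++ p ++ d :: q) (pre ++ d :: p ++ q).
Proof.
elim/last_ind: p q => [|p c IH] q dp free; first exact: free_swaps_refl.
have cd : c != d by apply: contraNneq dp => <-; rewrite mem_rcons mem_head.
have dp' : d \notin p by apply: contra dp; rewrite mem_rcons inE => ->; rewrite orbT.
have cnt e : count_mem e (pre ++ rcons p c ++ d :: q) = count_mem e (pre ++ p ++ d :: c :: q).
  by rewrite -cats1 !count_cat /=; lia.
apply: (@free_swaps_step _ (pre ++ p ++ d :: c :: q)).
  exists (pre ++ p), c, d, q; rewrite -!catA -cats1 -catA; split => //.
  move: (free p c [::] (esym (cats1 p c))); rewrite /free_pair cd.
  case/orP => /andP [H1 H2]; [left | right]; move: H1 H2; rewrite -!count_mem_gt0.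
    by rewrite !count_cat; split; count_lia.
  rewrite -cats1 !count_cat /= !eqxx (eq_sym d c) (negbTE cd) (count_memPn dp') /=.
  by split; count_lia.
rewrite -cats1 -catA /=; apply: IH => // p1 c' p2 Ep.
rewrite -(free_pair_count _ _ _ _ cnt); apply: (free p1 c' (rcons p2 c)).
by rewrite Ep rcons_cat.
Qed.

Lemma same_fixed_order_bubble (pre p q w : word) (d : nat) : d \notin p ->
  same_fixed_order (pre ++ p ++ d :: q) (pre ++ d :: w) ->
  forall p1 c p2, p = p1 ++ c :: p2 ->
    free_pair (pre ++ p ++ d :: q) c (count_mem c (pre ++ p1)) d (count_mem d pre).
Proof.
move=> dp same p1 c p2 Ep.
have cd : c != d by apply: contraNneq dp => <-; rewrite Ep mem_cat mem_head orbT.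
have dp1 : count_mem d p1 = 0 by apply/count_memPn; apply: contra dp; rewrite Ep mem_cat => ->.
apply/negPn/negP => fixed.
have before : occ_before (pre ++ p ++ d :: q) c (count_mem c (pre ++ p1)) d (count_mem d pre).
  exists (pre ++ p1 ++ [:: c]), (p2 ++ d :: q); rewrite Ep -!catA; split => //.
  by rewrite !count_cat /= !eqxx (negbTE cd); count_lia.
have after : occ_before (pre ++ d :: w) d (count_mem d pre) c (count_mem c (pre ++ p1)).
  exists (pre ++ [:: d]), w; rewrite -catA !count_cat /= eqxx (eq_sym d c) (negbTE cd).
  by split => //; count_lia.
apply: occ_before_asym after; apply/(same _ _ _ _ cd) => //; rewrite Ep !count_cat /= eqxx;
  count_lia.
Qed.

Lemma free_swaps_same_fixed_order_cat (pre w1 w2 : word) :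
  (forall e, count_mem e (pre ++ w1) = count_mem e (pre ++ w2)) ->
  same_fixed_order (pre ++ w1) (pre ++ w2) -> free_swaps (pre ++ w1) (pre ++ w2).
Proof.
elim: w2 pre w1 => [|d w2 IH] pre w1 cnt same.
  case: w1 cnt {same} => [|a w1] cnt; first exact: free_swaps_refl.
  by move: (cnt a); rewrite !count_cat /= eqxx; count_lia.
have: d \in w1 by rewrite -count_mem_gt0; move: (cnt d); rewrite !count_cat /= eqxx; count_lia.
case/split_first=> p [q [Ew1 dp]]; subst w1.
have bubble := free_swaps_bubble dp (same_fixed_order_bubble dp same).
have cnt' e : count_mem e (pre ++ p ++ d :: q) = count_mem e ((pre ++ [:: d]) ++ p ++ q).
  by rewrite -catA; apply: free_swaps_count bubble.
apply: (free_swaps_trans bubble).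
have -> : pre ++ d :: p ++ q = (pre ++ [:: d]) ++ p ++ q by rewrite -catA.
have -> : pre ++ d :: w2 = (pre ++ [:: d]) ++ w2 by rewrite -catA.
apply: IH => [e|c k d' j cd' Hk Hj fixed]; first by rewrite -cnt' cnt -catA.
rewrite -cnt' in Hk; rewrite -cnt' in Hj; rewrite -(free_pair_count _ _ _ _ cnt') in fixed.
by rewrite -!catA /= -(free_swaps_occ_before bubble fixed); apply: same.
Qed.

Lemma free_swaps_same_fixed_order (w1 w2 : word) :
  (forall e, count_mem e w1 = count_mem e w2) -> same_fixed_order w1 w2 -> free_swaps w1 w2.
Proof. exact: (@free_swaps_same_fixed_order_cat [::]). Qed.

(** * Equational derivations *)

Definition subst (sg : nat -> word) (w : word) : word := flatten (map sg w).

Inductive deriv (S : seq identity) : word -> word -> Prop :=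
  | deriv_refl u : deriv S u u
  | deriv_sym u v : deriv S u v -> deriv S v u
  | deriv_trans u v w : deriv S u v -> deriv S v w -> deriv S u w
  | deriv_ax (p s : word) (sg : nat -> word) (l r : word) :
      (l, r) \in S -> deriv S (p ++ subst sg l ++ s) (p ++ subst sg r ++ s).

Section Soundness.
Variable N : mstruct.
Hypothesis monN : is_monoid N.

Let meq_refl : forall x : car N, meq x x. Proof. by case: monN. Qed.
Let meq_sym : forall x y : car N, meq x y -> meq y x. Proof. by case: monN => _ []. Qed.
Let meq_trans : forall x y z : car N, meq x y -> meq y z -> meq x z.
Proof. by case: monN => _ [_ []]. Qed.
Let mop_meq : forall x x' y y' : car N, meq x x' -> meq y y' -> meq (mop x y) (mop x' y').
Proof. by case: monN => _ [_ [_ []]]. Qed.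
Let mopA : forall x y z : car N, meq (mop x (mop y z)) (mop (mop x y) z).
Proof. by case: monN => _ [_ [_ [_ []]]]. Qed.
Let mop1l : forall x, meq (mop (mone N) x) x.
Proof. by case: monN => _ [_ [_ [_ [_ H]]]] x; case: (H x). Qed.

Lemma eval_cat (phi : nat -> car N) (x y : word) :
  meq (eval phi (x ++ y)) (mop (eval phi x) (eval phi y)).
Proof.
elim: x => [|a x IH] /=; first exact/meq_sym/mop1l.
exact: meq_trans (mop_meq (meq_refl (phi a)) IH) (mopA _ _ _).
Qed.

Lemma eval_subst (phi : nat -> car N) (sg : nat -> word) (w : word) :
  meq (eval phi (subst sg w)) (eval (fun i => eval phi (sg i)) w).
Proof.
elim: w => [|a w IH] /=; first exact: meq_refl.
exact: meq_trans (eval_cat _ _ _) (mop_meq (meq_refl _) IH).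
Qed.

Lemma eval_cat3_meq (phi : nat -> car N) (p u v s : word) :
  meq (eval phi u) (eval phi v) -> meq (eval phi (p ++ u ++ s)) (eval phi (p ++ v ++ s)).
Proof.
move=> uv; apply: meq_trans (eval_cat _ _ _) _; apply/meq_sym.
apply: meq_trans (eval_cat _ _ _) _; apply: mop_meq; first exact: meq_refl.
apply: meq_trans (eval_cat _ _ _) _; apply/meq_sym.
apply: meq_trans (eval_cat _ _ _) _; apply: mop_meq => //; exact: meq_refl.
Qed.

Lemma sat_deriv (S : seq identity) (u v : word) :
  (forall id, id \in S -> sat N id) -> deriv S u v -> sat N (u, v).
Proof.
move=> satS; elim=> {u v} [w|u v _ IH|u v w _ IH1 _ IH2|p s sg l r lrS] phi /=.
- exact: meq_refl.
- exact: meq_sym.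
- exact: meq_trans (IH2 phi).
apply: eval_cat3_meq; apply: meq_trans (eval_subst _ _ _) _; apply/meq_sym.
apply: meq_trans (eval_subst _ _ _) _; exact/meq_sym/(satS _ lrS).
Qed.

Lemma sat_sym u v : sat N (u, v) -> sat N (v, u).
Proof. by move=> H phi; apply: meq_sym; apply: H. Qed.

Lemma sat_trans u v w : sat N (u, v) -> sat N (v, w) -> sat N (u, w).
Proof. by move=> H1 H2 phi; apply: meq_trans (H1 phi) (H2 phi). Qed.

End Soundness.

Lemma deriv_axn (S : seq identity) (i : nat) (ws : seq word) (p s u v : word) :
  i < size S ->
  u = p ++ subst (nth [::] ws) (nth ([::], [::]) S i).1 ++ s ->
  v = p ++ subst (nth [::] ws) (nth ([::], [::]) S i).2 ++ s -> deriv S u v.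
Proof. by move=> iS -> ->; apply: deriv_ax; rewrite -surjective_pairing mem_nth. Qed.

(** [ws] lists the words substituted for the variables x, y, t, s, z, in this order. *)
Ltac inst_axiom i ws p s :=
  apply: (@deriv_axn _ i ws p s) => //;
  rewrite /subst /Sigma1 /Sigma2 /vx /vy /vt /vs /vz /=;
  repeat (rewrite -catA /=); rewrite ?cats0 //.

Lemma Sigma1_del (p q : word) (x : nat) : x \in p -> x \in q ->
  deriv Sigma1 (p ++ x :: q) (p ++ q).
Proof.
case/mem_split=> p1 [t ->] /mem_split [s [q2 ->]].
apply: deriv_sym; inst_axiom 0 [:: [:: x]; [::]; t; s] p1 q2.
Qed.

Lemma Sigma1_swap_before (p q : word) (x y : nat) : x \in p -> y \in p ->
  deriv Sigma1 (p ++ x :: y :: q) (p ++ y :: x :: q).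
Proof.
move=> xp yp; have del z s : z \in p -> z \in s -> deriv Sigma1 (p ++ z :: s) (p ++ s).
  exact: Sigma1_del.
apply: (@deriv_trans _ _ (p ++ y :: x :: y :: q)); first by apply/deriv_sym/del; rewrite ?inE ?eqxx ?orbT.
apply: (@deriv_trans _ _ (p ++ x :: y :: x :: y :: q)).
  by apply/deriv_sym/del; rewrite ?inE ?eqxx ?orbT.
apply: (@deriv_trans _ _ (p ++ y :: x :: y :: x :: q)).
  by inst_axiom 1 [:: [:: x]; [:: y]] p q.
apply: (@deriv_trans _ _ (p ++ x :: y :: x :: q)); first by apply/del; rewrite ?inE ?eqxx ?orbT.
by apply/del; rewrite ?inE ?eqxx ?orbT.
Qed.

Lemma Sigma1_swap_after (p q : word) (x y : nat) : x \in q -> y \in q ->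
  deriv Sigma1 (p ++ x :: y :: q) (p ++ y :: x :: q).
Proof.
move=> xq yq; have del s z s' : z \in s -> z \in s' -> deriv Sigma1 (p ++ s ++ z :: s') (p ++ s ++ s').
  by move=> zs zs'; rewrite !catA; apply: Sigma1_del; rewrite // mem_cat zs orbT.
apply: (@deriv_trans _ _ (p ++ [:: x; y] ++ x :: q)).
  by apply: deriv_sym; apply: (del [:: x; y] x); rewrite ?inE ?eqxx ?orbT.
apply: (@deriv_trans _ _ (p ++ [:: x; y; x] ++ y :: q)).
  by apply: deriv_sym; apply: (del [:: x; y; x] y); rewrite ?inE ?eqxx ?orbT.
apply: (@deriv_trans _ _ (p ++ [:: y; x; y] ++ x :: q)).
  by inst_axiom 1 [:: [:: x]; [:: y]] p q.
apply: (@deriv_trans _ _ (p ++ [:: y; x] ++ x :: q)).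
  by apply: (del [:: y; x] y); rewrite ?inE ?eqxx ?yq ?orbT.
by apply: (del [:: y; x] x); rewrite ?inE ?eqxx ?orbT.
Qed.

Lemma Sigma1_free_swap (w w' : word) : free_swap w w' -> deriv Sigma1 w w'.
Proof.
case=> p [x [y [q [-> -> _ [[H1 H2]|[H1 H2]]]]]];
  [exact: Sigma1_swap_before | exact: Sigma1_swap_after].
Qed.

Lemma deriv_free_swaps (S : seq identity) (w w' : word) :
  (forall u u', free_swap u u' -> deriv S u u') -> free_swaps w w' -> deriv S w w'.
Proof.
move=> H; elim=> [u|u v {}w uv _ IH]; first exact: deriv_refl.
exact: deriv_trans (H _ _ uv) IH.
Qed.

Lemma Sigma2_dup (p q : word) (x : nat) : x \in p ->
  deriv Sigma2 (p ++ x :: q) (p ++ x :: x :: q).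
Proof. by case/mem_split=> p1 [t ->]; inst_axiom 0 [:: [:: x]; [::]; t] p1 q. Qed.

Lemma Sigma2_del (p q : word) (x : nat) : 1 < count_mem x p -> x \in q ->
  deriv Sigma2 (p ++ x :: q) (p ++ q).
Proof.
case/split_twice=> p1 [z [t ->]] /mem_split [s [q2 ->]].
by inst_axiom 3 [:: [:: x]; [::]; t; s; z] p1 q2.
Qed.

Lemma Sigma2_swap_before (p q : word) (x y : nat) : x != y -> x \in p -> y \in p ->
  deriv Sigma2 (p ++ x :: y :: q) (p ++ y :: x :: q).
Proof.
move=> xy /mem_split [a [b ->]] yp; case: (boolP (y \in b)) => [|yb].
  by case/mem_split=> t [s ->]; inst_axiom 1 [:: [:: x]; [:: y]; t; s] a q.
have: y \in a by move: yp; rewrite mem_cat inE (negbTE yb) eq_sym (negbTE xy) !orbF.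
by case/mem_split=> a1 [a2 ->]; apply: deriv_sym; inst_axiom 1 [:: [:: y]; [:: x]; a2; b] a1 q.
Qed.

Lemma Sigma2_swap_after (p q : word) (x y : nat) : x != y -> x \in q -> y \in q ->
  deriv Sigma2 (p ++ x :: y :: q) (p ++ y :: x :: q).
Proof.
move=> xy /mem_split [a [b ->]] yq; case: (boolP (y \in b)) => [|yb].
  by case/mem_split=> s1 [s2 ->]; inst_axiom 2 [:: [:: x]; [:: y]; a; s1] p s2.
have: y \in a by move: yq; rewrite mem_cat inE (negbTE yb) eq_sym (negbTE xy) !orbF.
by case/mem_split=> a1 [a2 ->]; apply: deriv_sym; inst_axiom 2 [:: [:: y]; [:: x]; a1; a2] p b.
Qed.

Lemma Sigma2_free_swap (w w' : word) : free_swap w w' -> deriv Sigma2 w w'.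
Proof.
case=> p [x [y [q [-> -> xy [[H1 H2]|[H1 H2]]]]]];
  [exact: Sigma2_swap_before | exact: Sigma2_swap_after].
Qed.

(** * Normal forms *)

Lemma deriv_cap (S : seq identity) (m : nat) :
  (forall p q x, m <= count_mem x p -> x \in q -> deriv S (p ++ x :: q) (p ++ q)) ->
  forall w, exists w', deriv S w w' /\ forall c, count_mem c w' = minn (count_mem c w) m.+1.
Proof.
move=> del w; elim: {w}(size w) {-2}w (erefl (size w)) => [|n IH] w sw.
  by exists w; split=> [|c]; [exact: deriv_refl | rewrite (size0nil sw) min0n].
case: (boolP (has (fun c => m.+1 < count_mem c w) w)) => [/hasP [c _ cw]|]; last first.
  move/hasPn=> small; exists w; split=> [|c]; first exact: deriv_refl.
  case: (boolP (c \in w)) => [/small|/count_memPn ->]; last by rewrite min0n.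
  by rewrite ltnNge negbK => /minn_idPl.
have [p [q [E pc]]] := split_occ (ltnW cw); subst w.
have qc : c \in q.
  by rewrite -count_mem_gt0; move: cw; rewrite count_cat /= eqxx pc; count_lia.
have [|w' [D cnt]] := IH (p ++ q); first by move: sw; rewrite !size_cat /=; lia.
exists w'; split; first exact: deriv_trans (del _ _ _ (eq_leq (esym pc)) qc) D.
move=> e; rewrite cnt !count_cat /=; case: (eqVneq c e) => [<-|] /=; last by rewrite add0n.
by move: cw; rewrite count_cat /= eqxx; count_lia.
Qed.

Lemma Sigma1_normal_form (w : word) :
  exists w', deriv Sigma1 w w' /\ forall c, count_mem c w' = minn (count_mem c w) 2.
Proof. by apply: deriv_cap => p q x /= xp; apply: Sigma1_del; rewrite -count_mem_gt0. Qed.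

Lemma Sigma2_raise2 (L w : word) : exists w', deriv Sigma2 w w' /\
  forall c, count_mem c w' = if (c \in L) && (count_mem c w == 2) then 3 else count_mem c w.
Proof.
elim: L => [|a L [w1 [D cnt]]]; first by exists w; split=> [|c]; first exact: deriv_refl.
case: (eqVneq (count_mem a w1) 2) => [a2|a2]; last first.
  exists w1; split=> // c; rewrite cnt inE; case: (eqVneq c a) => [->|] //=.
  by move: a2; rewrite cnt; case: (a \in L) => //= /negbTE ->.
have [p [q [E pa]]] := split_occ (n := 1) (eq_leq (esym a2)); subst w1.
exists (p ++ a :: a :: q); split.
  by apply: deriv_trans D (Sigma2_dup _ _); rewrite -count_mem_gt0 pa.
move=> c; rewrite inE; case: (eqVneq c a) => [->|ca] /=; last first.
  by rewrite -cnt !count_cat /= [a == c]eq_sym (negbTE ca).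
have w2 : count_mem a w = 2 by move: (cnt a); rewrite a2; case: ifP => [_ /eqP //|_ <-].
by rewrite w2 eqxx /=; move: a2; rewrite !count_cat /= eqxx; count_lia.
Qed.

Lemma Sigma2_normal_form (w : word) : exists w', deriv Sigma2 w w' /\
  forall c, count_mem c w' = if 1 < count_mem c w then 3 else count_mem c w.
Proof.
have [w1 [D1 cnt1]] := deriv_cap (m := 2) (fun p q x => @Sigma2_del p q x) w.
have [w' [D cnt]] := Sigma2_raise2 w1 w1.
exists w'; split=> [|c]; first exact: deriv_trans D1 D.
rewrite cnt cnt1; case: (boolP (c \in w1)) => cw1 /=.
  by case: (count_mem c w) => [|[|[|n]]]; rewrite /minn.
move: cw1; rewrite -count_mem_gt0 cnt1 lt0n negbK => /eqP.
by case: (count_mem c w) => [|[|[|n]]]; rewrite /minn.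
Qed.

(** * Finite monoids given by multiplication tables *)

(** A table with [tzero F = n] describes a monoid on [0, ..., n] with identity [0]
    and zero [n]; [trows F] lists the rows of the multiplication table, and
    numbers above [n] are read as [n]. *)

Record table := Table { tzero : nat; trows : seq (seq nat) }.

Definition tclamp (F : table) (i : nat) : nat := if i <= tzero F then i else tzero F.
Definition tmul (F : table) (i j : nat) : nat :=
  nth (tzero F) (nth [::] (trows F) (tclamp F i)) (tclamp F j).
Definition tmonoid (F : table) : mstruct :=
  @MStruct nat (fun x y => tclamp F x = tclamp F y) (tmul F) 0.
Definition teval (F : table) (phi : nat -> nat) (w : word) : nat :=
  foldr (fun a acc => tmul F (phi a) acc) 0 w.

Lemma teval_eval (F : table) (phi : nat -> nat) (w : word) :
  @eval (tmonoid F) phi w = teval F phi w.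
Proof. by []. Qed.

Definition telems (F : table) : seq nat := iota 0 (tzero F).+1.

Definition table_ok (F : table) : bool :=
  [&& all (fun i => all (fun j => tmul F i j <= tzero F) (telems F)) (telems F),
      all (fun i => all (fun j => all (fun k =>
        tmul F i (tmul F j k) == tmul F (tmul F i j) k) (telems F)) (telems F)) (telems F) &
      all (fun i => [&& tmul F 0 i == i, tmul F i 0 == i,
                tmul F (tzero F) i == tzero F & tmul F i (tzero F) == tzero F]) (telems F)].

Section TableTheory.
Variable F : table.
Hypothesis okF : table_ok F.

Lemma mem_telems i : (i \in telems F) = (i <= tzero F).
Proof. by rewrite mem_iota add0n ltnS. Qed.

Lemma tclamp_le i : tclamp F i <= tzero F.
Proof. by rewrite /tclamp; case: ifP. Qed.

Lemma tclamp_id i : i <= tzero F -> tclamp F i = i.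
Proof. by rewrite /tclamp => ->. Qed.

Lemma tmul_clampl i j : tmul F (tclamp F i) j = tmul F i j.
Proof. by rewrite /tmul (tclamp_id (tclamp_le i)). Qed.

Lemma tmul_clampr i j : tmul F i (tclamp F j) = tmul F i j.
Proof. by rewrite /tmul (tclamp_id (tclamp_le j)). Qed.

Lemma tclamp_telems i : tclamp F i \in telems F.
Proof. by rewrite mem_telems tclamp_le. Qed.

Lemma tmul_le i j : tmul F i j <= tzero F.
Proof.
case/and3P: okF => /allP H _ _.
rewrite -tmul_clampl -tmul_clampr.
by move/allP: (H _ (tclamp_telems i)) => /(_ _ (tclamp_telems j)).
Qed.

Lemma tmulA i j k : tmul F i (tmul F j k) = tmul F (tmul F i j) k.
Proof.
case/and3P: okF => _ /allP H _.
have E : tmul F i (tmul F j k) = tmul F (tclamp F i) (tmul F (tclamp F j) (tclamp F k)).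
  by rewrite tmul_clampl tmul_clampl tmul_clampr.
have E' : tmul F (tmul F i j) k = tmul F (tmul F (tclamp F i) (tclamp F j)) (tclamp F k).
  by rewrite tmul_clampl tmul_clampr tmul_clampr.
rewrite E E'.
by move/allP: (H _ (tclamp_telems i)) => /(_ _ (tclamp_telems j)) /allP /(_ _ (tclamp_telems k)) /eqP.
Qed.

Lemma table_unit_zero i : i <= tzero F -> [&& tmul F 0 i == i, tmul F i 0 == i,
                tmul F (tzero F) i == tzero F & tmul F i (tzero F) == tzero F].
Proof. by case/and3P: okF => _ _ /allP H Hi; apply: H; rewrite mem_telems. Qed.

Lemma tmul1l i : i <= tzero F -> tmul F 0 i = i.
Proof. by move/table_unit_zero => /and4P [/eqP]. Qed.

Lemma tmul1r i : i <= tzero F -> tmul F i 0 = i.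
Proof. by move/table_unit_zero => /and4P [_ /eqP]. Qed.

Lemma tmul0l i : tmul F (tzero F) i = tzero F.
Proof. by rewrite -tmul_clampr; move: (table_unit_zero (tclamp_le i)) => /and4P [_ _ /eqP]. Qed.

Lemma tmul0r i : tmul F i (tzero F) = tzero F.
Proof. by rewrite -tmul_clampl; move: (table_unit_zero (tclamp_le i)) => /and4P [_ _ _ /eqP]. Qed.

Lemma teval_le phi w : teval F phi w <= tzero F.
Proof. case: w => [|a w] /=; [exact: leq0n | exact: tmul_le]. Qed.

Lemma teval_cat phi x y : teval F phi (x ++ y) = tmul F (teval F phi x) (teval F phi y).
Proof.
elim: x => [|a x IH] /=; first by rewrite tmul1l // teval_le.
by rewrite IH tmulA.
Qed.

Lemma teval_clamp phi w : teval F phi w = teval F (fun i => tclamp F (phi i)) w.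
Proof. by elim: w => [|a w IH] //=; rewrite IH tmul_clampl. Qed.

Lemma teval_eq_in phi psi w : (forall c, c \in w -> phi c = psi c) ->
  teval F phi w = teval F psi w.
Proof.
elim: w => [|a w IH] //= H; rewrite H ?mem_head // IH // => c Hc.
by apply: H; rewrite inE Hc orbT.
Qed.

Lemma tmonoid_monoid : is_monoid (tmonoid F).
Proof.
split; first by []. split; first by [].
split; first by move=> x y z /= -> ->.
split; first by move=> x x' y y' /= Hx Hy; rewrite -tmul_clampl Hx tmul_clampl
   -tmul_clampr Hy tmul_clampr.
split; first by move=> x y z /=; rewrite tmulA.
move=> x /=; rewrite -tmul_clampr -[tmul F x 0]tmul_clampl.
by rewrite tmul1l ?tmul1r ?tclamp_le // (tclamp_id (tclamp_le x)).
Qed.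

Lemma sat_tmonoid u v : sat (tmonoid F) (u, v) <-> forall phi, teval F phi u = teval F phi v.
Proof.
split=> H phi.
  by move: (H phi) => /=; rewrite !teval_eval !tclamp_id ?teval_le.
by rewrite /= !teval_eval H.
Qed.

End TableTheory.

Fixpoint tuples (k : nat) (s : seq nat) : seq (seq nat) :=
  if k is k'.+1 then flatten [seq [seq x :: t | t <- tuples k' s] | x <- s] else [:: [::]].

Lemma mem_tuples k s l : size l = k -> all (fun x => x \in s) l -> l \in tuples k s.
Proof.
elim: k l => [|k IH] [|x l] //= [Hs] /andP [Hx Hl].
apply/flattenP; exists [seq x :: t | t <- tuples k s]; first by apply: map_f.
by apply: map_f; apply: IH.
Qed.

Definition sat_checkb (F : table) (id : identity) : bool :=
  let vars := undup (id.1 ++ id.2) in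
  all (fun l => teval F (fun i => nth 0 l (index i vars)) id.1 ==
                teval F (fun i => nth 0 l (index i vars)) id.2)
      (tuples (size vars) (telems F)).

Lemma sat_of_checkb (F : table) (id : identity) :
  table_ok F -> sat_checkb F id -> sat (tmonoid F) id.
Proof.
case: id => u v okF /allP check; apply/(sat_tmonoid okF) => phi.
set vars := undup (u ++ v); set l := [seq tclamp F (phi i) | i <- vars].
have lT : l \in tuples (size vars) (telems F).
  apply: mem_tuples; first by rewrite size_map.
  by apply/allP => x /mapP [i _ ->]; rewrite mem_telems tclamp_le.
have phi_l w : {subset w <= vars} -> teval F phi w = teval F (fun i => nth 0 l (index i vars)) w.
  move=> wvars; rewrite teval_clamp; apply: teval_eq_in => c cw.
  by rewrite (nth_map 0) ?index_mem ?wvars // nth_index // wvars.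
rewrite !phi_l => [|c cv|c cu]; rewrite ?mem_undup ?mem_cat ?cu ?cv ?orbT //.
exact/eqP/(check l lT).
Qed.

Definition table_emb (F F' : table) (h : nat -> nat) : bool :=
  [&& h 0 == 0,
  all (fun i => (h i <= tzero F') &&
     all (fun j => h (tmul F i j) == tmul F' (h i) (h j)) (telems F)) (telems F) &
  all (fun i => all (fun j => (h i == h j) ==> (i == j)) (telems F)) (telems F)].

Lemma sat_table_emb (F F' : table) (h : nat -> nat) (id : identity) :
  table_ok F -> table_ok F' -> table_emb F F' h -> sat (tmonoid F') id -> sat (tmonoid F) id.
Proof.
case: id => u v okF okF' /and3P [/eqP h0 /allP hom /allP inj] /(sat_tmonoid okF') uv.
apply/(sat_tmonoid okF) => phi; rewrite (teval_clamp _ phi u) (teval_clamp _ phi v).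
set phi' := fun i => tclamp F (phi i).
have tevalF w : teval F phi' w \in telems F by rewrite mem_telems teval_le.
have h_teval w : teval F' (fun i => h (phi' i)) w = h (teval F phi' w).
  elim: w => [|a w IH] //=; rewrite IH.
  have a_el : phi' a \in telems F by rewrite mem_telems tclamp_le.
  by case/andP: (hom _ a_el) => _ /allP /(_ _ (tevalF w)) /eqP ->.
move: (uv (fun i => h (phi' i))); rewrite !h_teval => huv.
by move/allP: (inj _ (tevalF u)) => /(_ _ (tevalF v)); rewrite huv eqxx => /eqP.
Qed.

Definition tpow (F : table) (z e : nat) : nat := iter e (tmul F z) 0.

Lemma teval_nseq (F : table) g e c : teval F g (nseq e c) = tpow F (g c) e.
Proof. by elim: e => [|e IH] //=; rewrite IH. Qed.

Lemma tpow_idem (F : table) z e : table_ok F -> z <= tzero F ->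
  tmul F z (tmul F z z) = tmul F z z -> 1 < e -> tpow F z e = tmul F z z.
Proof.
move=> okF z0 zzz; case: e => [|[|e]] // _; elim: e => [|e IH].
  by rewrite /tpow /= tmul1r.
by rewrite /tpow iterS -/(tpow F z e.+2) IH.
Qed.

Lemma tpow_cases (F : table) z e : table_ok F -> z <= tzero F ->
  tmul F z (tmul F z z) = tmul F z z -> 0 < e ->
  tpow F z e = z \/ tpow F z e = tmul F z z.
Proof.
move=> okF z0 zzz; case: e => [|[|e]] // _; last by right; apply: tpow_idem.
by left; rewrite /tpow /= tmul1r.
Qed.

Lemma teval_indicator (F : table) (c z : nat) (w : word) : table_ok F -> z <= tzero F ->
  teval F (fun i => if i == c then z else 0) w = tpow F z (count_mem c w).
Proof.
move=> okF z0; elim: w => [|a w IH] //=; rewrite IH.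
case: (eqVneq a c) => [//|_] /=; rewrite add0n tmul1l //.
by case: (count_mem c w) => [|n] //; rewrite /tpow /= tmul_le.
Qed.

Lemma teval_mem_ideal (F : table) (S P : seq nat) (z c : nat) (phi : nat -> nat) (w : word) :
  table_ok F -> (forall i, phi i \in S) -> phi c = z -> c \in w ->
  all (fun y => all (fun x => tmul F y x \in P) P) S ->
  all (fun x => tmul F z x \in P) (telems F) -> teval F phi w \in P.
Proof.
move=> okF phiS phic + /allP SP /allP zP; elim: w => [|a w IH] //=.
case: (eqVneq a c) => [->|ac] cw; first by rewrite phic; apply: zP; rewrite mem_telems teval_le.
have {}cw : c \in w by move: cw; rewrite inE eq_sym (negbTE ac).
by move/allP: (SP _ (phiS a)) => /(_ _ (IH cw)).
Qed.

(** * Rees quotients M_tau(W) as tables *)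

(** Certifies that [z |-> rep z] identifies [F] with M_tau(W): letters [c >= L] are
    sent to zero by [g], and every [rep z] with [z < tzero F] is a factor of a word of
    [ws], hence nonzero. *)
Definition rep_checkb (taub : word -> word -> bool) (F : table) (g : nat -> nat)
    (rep : nat -> word) (L : nat) (ws : seq word) : bool :=
  let Z := iota 0 (tzero F) in
  [&& rep 0 == [::],
      all (fun c => all (fun z => (tmul F (g c) z < tzero F) ==>
        taub (c :: rep z) (rep (tmul F (g c) z))) Z) (iota 0 L),
      all (fun z1 => all (fun z2 => taub (rep z1) (rep z2) ==> (z1 == z2)) Z) Z,
      all (fun z => teval F g (rep z) == z) (iota 0 (tzero F).+1) &
      all (fun z => has (infix (rep z)) ws) Z].

Section MtauTable.
Variables (tau : word -> word -> Prop) (taub : word -> word -> bool).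
Hypothesis tauP : forall u v, reflect (tau u v) (taub u v).
Hypothesis tau_refl : forall u, tau u u.
Hypothesis tau_sym : forall u v, tau u v -> tau v u.
Hypothesis tau_trans : forall u v w, tau u v -> tau v w -> tau u w.
Hypothesis tau_cat : forall p u v s, tau u v -> tau (p ++ u ++ s) (p ++ v ++ s).
Variables (W : word -> Prop) (F : table) (g : nat -> nat) (rep : nat -> word).
Variables (L : nat) (ws : seq word).
Hypothesis okF : table_ok F.
Hypothesis g_zero : forall c, L <= c -> g c = tzero F.
Hypothesis ws_W : forall w, w \in ws -> W w.
Hypothesis reps_ok : rep_checkb taub F g rep L ws.
Hypothesis W_nonzero : forall y u, W u -> tau y u -> teval F g y < tzero F.

Local Notation cls := (teval F g).

Lemma cls_cases x : cls x < tzero F \/ cls x = tzero F.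
Proof. by move: (teval_le okF g x); rewrite leq_eqVlt => /orP [/eqP ->|->]; auto. Qed.

Lemma tau_rep_cls x : cls x < tzero F -> tau x (rep (cls x)).
Proof.
case/and5P: reps_ok => /eqP rep0 /allP step _ _ _.
elim: x => [|a x IH] /=; first by rewrite rep0.
case: (cls_cases x) => [x0|->]; last by rewrite tmul0r // ltnn.
move=> ax0; have := tau_cat [:: a] [::] (IH x0); rewrite !cats0 => /tau_trans; apply; apply/tauP.
case: (ltnP a L) => [aL|/g_zero ga]; last by move: ax0; rewrite ga tmul0l // ltnn.
have aL' : a \in iota 0 L by rewrite mem_iota.
have x0' : cls x \in iota 0 (tzero F) by rewrite mem_iota.
by move/allP: (step a aL') => /(_ _ x0') /implyP; apply.
Qed.

Lemma nonzero_cls x : nonzero tau W x <-> cls x < tzero F.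
Proof.
split=> [[u [p [s [Wu xu]]]]|x0].
  move: (W_nonzero Wu xu); rewrite !(teval_cat okF).
  by case: (cls_cases x) => // ->; rewrite tmul0l // tmul0r // ltnn.
case/and5P: reps_ok => _ _ _ _ /allP cover.
have z0 : cls x \in iota 0 (tzero F) by rewrite mem_iota.
case/hasP: (cover _ z0) => w /ws_W Ww /infixP [p [s E]]; exists w, p, s; split=> //.
by rewrite E; apply: tau_cat; apply: tau_rep_cls.
Qed.

Lemma meq_Mtau x y : meq (m := Mtau tau W) x y <-> cls x = cls y.
Proof.
case/and5P: reps_ok => _ _ /allP inj _ _; rewrite /=; split.
  case=> [[/nonzero_cls x0 /nonzero_cls y0]|[/nonzero_cls x0 [/nonzero_cls y0 xy]]].
    by case: (cls_cases x) => // ->; case: (cls_cases y) => // ->.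
  have x0' : cls x \in iota 0 (tzero F) by rewrite mem_iota.
  have y0' : cls y \in iota 0 (tzero F) by rewrite mem_iota.
  move/allP: (inj _ x0') => /(_ _ y0') /implyP /(_ _) /eqP; apply; apply/tauP.
  exact: tau_trans (tau_sym (tau_rep_cls x0)) (tau_trans xy (tau_rep_cls y0)).
move=> E; case: (cls_cases x) => [x0|x0]; [right | left]; rewrite !nonzero_cls -E ?x0 ?ltnn //.
do 2!split=> //; apply: tau_trans (tau_rep_cls x0) _; rewrite E.
by apply/tau_sym/tau_rep_cls; rewrite -E.
Qed.

Lemma cls_eval (psi : nat -> word) (w : word) :
  cls (@eval (Mtau tau W) psi w) = teval F (fun i => cls (psi i)) w.
Proof. by elim: w => [|a w IH] //=; rewrite (teval_cat okF) IH. Qed.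

Lemma sat_Mtau_table (id : identity) : sat (Mtau tau W) id <-> sat (tmonoid F) id.
Proof.
case/and5P: reps_ok => _ _ _ /allP rep_cls _.
case: id => u v; split => H.
  apply/(sat_tmonoid okF) => phi; rewrite (teval_clamp F phi u) (teval_clamp F phi v).
  move: (H (fun i => rep (tclamp F (phi i)))) => /meq_Mtau; rewrite /= !cls_eval.
  suff clsK w : teval F (fun i => cls (rep (tclamp F (phi i)))) w =
                teval F (fun i => tclamp F (phi i)) w by rewrite !clsK.
  by apply: teval_eq_in => c _; apply/eqP/rep_cls; rewrite mem_iota ltnS tclamp_le.
by move=> psi; apply/meq_Mtau; rewrite /= !cls_eval; move/(sat_tmonoid okF): H; apply.
Qed.

End MtauTable.

(** * The monoids of the theorem as tables *)

Definition A01_to_nat (x : A01) : nat :=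
  match x with A1 => 0 | Ae => 1 | Af => 2 | Aef => 3 | A0 => 4 end.
Definition nat_to_A01 (i : nat) : A01 :=
  match i with 0 => A1 | 1 => Ae | 2 => Af | 3 => Aef | _ => A0 end.

Definition T_A01 : table := Eval vm_compute in Table 4
  [seq [seq A01_to_nat (A01_mul (nat_to_A01 i) (nat_to_A01 j)) | j <- iota 0 5] | i <- iota 0 5].

(** The multiplication table of [M_lambda(W)] on a list of representatives of its
    nonzero lambda-classes; the list is certified by [rep_checkb]. *)
Definition lam_table (reps : seq word) : table :=
  let n := size reps in
  let cls w := find (lamb w) reps in
  Table n [seq [seq if (i < n) && (j < n) then cls (nth [::] reps i ++ nth [::] reps j) else n
                   | j <- iota 0 n.+1] | i <- iota 0 n.+1].

Definition reps_apbp : seq word :=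
  [:: [::]; [:: la]; [:: la; la]; [:: lb]; [:: lb; lb]; [:: la; lb]; [:: la; la; lb];
      [:: la; lb; lb]; [:: la; la; lb; lb]].
Definition T_apbp : table := Eval vm_compute in lam_table reps_apbp.

Definition reps_ata : seq word :=
  [:: [::]; [:: la]; [:: la; la]; [:: lt]; [:: la; lt]; [:: lt; la]; [:: lt; la; la];
      [:: la; lt; la]].
Definition T_ata : table := Eval vm_compute in lam_table reps_ata.

Definition reps_atab : seq word :=
  [:: [::]; [:: la]; [:: la; la]; [:: lt]; [:: la; lt]; [:: lt; la]; [:: lt; la; la];
      [:: la; lt; la]; [:: lb]; [:: lb; lb]; [:: la; lb]; [:: la; la; lb]; [:: la; lb; lb];
      [:: la; la; lb; lb]; [:: lt; la; lb]; [:: lt; la; la; lb]; [:: lt; la; lb; lb];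
      [:: lt; la; la; lb; lb]; [:: la; lt; la; la; lb]; [:: la; lt; la; la; lb; lb]].
Definition T_atab : table := Eval vm_compute in lam_table reps_atab.

Lemma T_A01_ok : table_ok T_A01. Proof. by vm_compute. Qed.
Lemma T_apbp_ok : table_ok T_apbp. Proof. by vm_compute. Qed.
Lemma T_ata_ok : table_ok T_ata. Proof. by vm_compute. Qed.
Lemma T_atab_ok : table_ok T_atab. Proof. by vm_compute. Qed.

Lemma A01_to_nat_mul x y :
  A01_to_nat (A01_mul x y) = tmul T_A01 (A01_to_nat x) (A01_to_nat y).
Proof. by case: x; case: y. Qed.

Lemma A01_to_natK i : A01_to_nat (nat_to_A01 i) = tclamp T_A01 i.
Proof. by case: i => [|[|[|[|[|i]]]]]. Qed.

Lemma A01_to_nat_eval (psi : nat -> A01) (w : word) :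
  A01_to_nat (@eval A01M psi w) = teval T_A01 (fun i => A01_to_nat (psi i)) w.
Proof. by elim: w => [|a w IH] //=; rewrite A01_to_nat_mul IH. Qed.

Lemma sat_A01_table (id : identity) : sat A01M id <-> sat (tmonoid T_A01) id.
Proof.
have okA := T_A01_ok; case: id => u v; split => H.
  apply/(sat_tmonoid okA) => phi; rewrite (teval_clamp _ phi u) (teval_clamp _ phi v).
  suff E w : teval T_A01 (fun i => tclamp T_A01 (phi i)) w =
             A01_to_nat (@eval A01M (fun i => nat_to_A01 (phi i)) w).
    by rewrite !E (H (fun i => nat_to_A01 (phi i))).
  by rewrite A01_to_nat_eval; apply: teval_eq_in => c _; rewrite A01_to_natK.
move=> psi; have inj : injective A01_to_nat by case; case.
apply: inj; by rewrite /= !A01_to_nat_eval; move/(sat_tmonoid okA): H; apply.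
Qed.

Lemma sat_Mtau1_apbp (id : identity) :
  sat (Mtau tau1 W_apbp_tau1) id <-> sat (tmonoid T_A01) id.
Proof.
set g := nth 4 [:: 1; 2].
apply: (@sat_Mtau_table _ _ tau1P tau1_refl tau1_sym tau1_trans tau1_cat _ _ g
  (nth [:: lt] [:: [::]; [:: la]; [:: lb]; [:: la; lb]]) 2 [:: [:: la; lb]]).
- exact: T_A01_ok.
- by move=> c c2; rewrite /g nth_default.
- by move=> w; rewrite inE => /eqP ->; exists 1, 1.
- by vm_compute.
move=> y u [k [m [k0 [m0 ->]]]] /tau1P.
rewrite (squash_nseq [::]) // -[nseq m lb]cats0 (squash_nseq [:: la]) //=.
move=> /eqP /squash_eq2 [e1 [e2 [e10 e20 ->]]]; rewrite (teval_cat T_A01_ok) !teval_nseq.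
by case: (tpow_cases (z := g la) T_A01_ok isT (erefl _) e10) => ->;
  case: (tpow_cases (z := g lb) T_A01_ok isT (erefl _) e20) => ->.
Qed.

Lemma sat_Mlam_apbp (id : identity) :
  sat (Mtau lam W_apbp_lam) id <-> sat (tmonoid T_apbp) id.
Proof.
set g := nth 9 [:: 1; 3].
apply: (@sat_Mtau_table _ _ lamP lam_refl lam_sym lam_trans lam_cat _ _ g
  (nth [:: lt; lt] reps_apbp) 2 [:: [:: la; la; lb; lb]]).
- exact: T_apbp_ok.
- by move=> c c2; rewrite /g nth_default.
- by move=> w; rewrite inE => /eqP ->; exists 2, 2.
- by vm_compute.
move=> y u [k [m [k2 [m2 ->]]]] yu.
have := lam_count la yu; have := lam_count lb yu; case: yu => /tau1P.
have k0 : 0 < k by lia.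
have m0 : 0 < m by lia.
rewrite (squash_nseq [::]) // -[nseq m lb]cats0 (squash_nseq [:: la]) //=.
move=> /eqP /squash_eq2 [e1 [e2 [_ _ ->]]] _.
rewrite !count_cat !count_nseq /= !mul1n !mul0n => e2m e1k.
have e12 : 1 < e1 by move: e1k; rewrite !(addn0, add0n) => ->.
have e22 : 1 < e2 by move: e2m; rewrite !(addn0, add0n) => ->.
rewrite (teval_cat T_apbp_ok) !teval_nseq (tpow_idem (z := g la) T_apbp_ok isT (erefl _) e12).
by rewrite (tpow_idem (z := g lb) T_apbp_ok isT (erefl _) e22).
Qed.

Lemma sat_Mlam_ata (id : identity) :
  sat (Mtau lam W_ata) id <-> sat (tmonoid T_ata) id.
Proof.
set g := nth 8 [:: 1; 8; 3].
apply: (@sat_Mtau_table _ _ lamP lam_refl lam_sym lam_trans lam_cat _ _ g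
  (nth [:: lt; lt] reps_ata) 3 [:: [:: la; lt; la; la]; [:: la; lt; la]]).
- exact: T_ata_ok.
- by move=> c c2; rewrite /g nth_default.
- by move=> w; rewrite !inE => /orP [] /eqP ->; [exists 2 | exists 1].
- by vm_compute.
move=> y u [k [k1 ->]] yu.
have := lam_count lt yu; have := lam_first2_adj (a := la) yu; case: yu => /tau1P.
rewrite -[nseq k la]cats0 (squash_nseq [:: la; lt]) //= => /eqP.
case/squash_eq3=> e1 [e2 [e3 [e10 e20 e30 ->]]] _.
rewrite !count_cat !count_nseq /= !mul1n !mul0n !addn0 !add0n first2_adj_cons_eq /=.
move=> adj e2t; have -> : e1 = 1.
  apply/eqP; rewrite eqn_leq e10 andbT leqNgt; apply/negP => e12.
  have /adj : 1 < 1 + k by lia.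
  by rewrite first2_adj_nseq.
have -> : e2 = 1 by apply/eqP; rewrite eqn_leq e20 andbT leqNgt e2t.
rewrite !(teval_cat T_ata_ok) !teval_nseq.
by case: (tpow_cases (z := g la) T_ata_ok isT (erefl _) e30) => ->.
Qed.

Lemma sat_Mlam_atab (id : identity) :
  sat (Mtau lam W_atab) id <-> sat (tmonoid T_atab) id.
Proof.
set g := nth 20 [:: 1; 8; 3].
apply: (@sat_Mtau_table _ _ lamP lam_refl lam_sym lam_trans lam_cat _ _ g
  (nth [:: lt; lt] reps_atab) 3 [:: [:: la; lt; la; la; lb; lb]; [:: la; lt; la; lb; lb]]).
- exact: T_atab_ok.
- by move=> c c2; rewrite /g nth_default.
- by move=> w; rewrite !inE => /orP [] /eqP ->; [exists 2, 2 | exists 1, 2].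
- by vm_compute.
move=> y u [k [m [k1 [m2 ->]]]] yu; have m0 : 0 < m by lia.
have := lam_count lt yu; have := lam_count lb yu; have := lam_first2_adj (a := la) yu.
case: yu => /tau1P; rewrite -[nseq m lb]cats0 (squash_nseq [:: la; lt]) //.
rewrite (squash_nseq [:: la; lt; la]) //= => /eqP.
case/squash_eq4=> e1 [e2 [e3 [e4 [e10 e20 e30 e40 ->]]]] _.
rewrite !count_cat !count_nseq /= !mul1n !mul0n !addn0 !add0n first2_adj_cons_eq /=.
move=> adj e4m e2t; have -> : e1 = 1.
  apply/eqP; rewrite eqn_leq e10 andbT leqNgt; apply/negP => e12.
  have /adj : 1 < 1 + k by lia.
  by rewrite first2_adj_nseq.
have -> : e2 = 1 by apply/eqP; rewrite eqn_leq e20 andbT leqNgt e2t.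
have e42 : 1 < e4 by rewrite e4m.
rewrite !(teval_cat T_atab_ok) !teval_nseq (tpow_idem (z := g lb) T_atab_ok isT (erefl _) e42).
by case: (tpow_cases (z := g la) T_atab_ok isT (erefl _) e30) => ->.
Qed.

(** * What the identities of A_0^1 and of M_lambda(ata^+) see *)

Lemma A01_sat_count (u v : word) : sat (tmonoid T_A01) (u, v) ->
  forall c, minn (count_mem c u) 2 = minn (count_mem c v) 2.
Proof.
move/(sat_tmonoid T_A01_ok) => uv c; move: (uv (fun i => if i == c then 3 else 0)).
have ef n : tpow T_A01 3 n = if n == 0 then 0 else if n == 1 then 3 else 4.
  by case: n => [|[|n]] //; rewrite (tpow_idem (z := 3) T_A01_ok).
rewrite !teval_indicator ?T_A01_ok // !ef.
by case: (count_mem c u) => [|[|n]]; case: (count_mem c v) => [|[|m]].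
Qed.

Definition assign_ef (c d : nat) (i : nat) : nat :=
  if i == c then A01_to_nat Ae else if i == d then A01_to_nat Af else 0.

Lemma teval_ef_sep (c d : nat) (p s : word) : c \in p -> c \notin s -> d \notin p -> d \in s ->
  teval T_A01 (assign_ef c d) (p ++ s) = A01_to_nat Aef.
Proof.
move=> cp cs dp ds; rewrite (teval_cat T_A01_ok).
rewrite (@teval_eq_in _ _ (fun i => if i == c then 1 else 0) p); last first.
  by move=> i ip; rewrite /assign_ef; case: eqP => // _; case: eqP => // di; rewrite -di ip in dp.
rewrite (@teval_eq_in _ _ (fun i => if i == d then 2 else 0) s); last first.
  by move=> i is_; rewrite /assign_ef; case: eqP => // ci; rewrite -ci is_ in cs.
rewrite !teval_indicator ?T_A01_ok //.
have cp0 : 0 < count_mem c p by rewrite count_mem_gt0.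
have ds0 : 0 < count_mem d s by rewrite count_mem_gt0.
by case: (tpow_cases (z := 1) T_A01_ok isT (erefl _) cp0) => ->;
  case: (tpow_cases (z := 2) T_A01_ok isT (erefl _) ds0) => ->.
Qed.

Lemma teval_ef_zero (c d : nat) (p s : word) : c != d -> d \in p -> c \in s ->
  teval T_A01 (assign_ef c d) (p ++ s) = A01_to_nat A0.
Proof.
move=> cd dp cs; have efS i : assign_ef c d i \in [:: 0; 1; 2].
  by rewrite /assign_ef; case: (i == c); case: (i == d).
have Hp : teval T_A01 (assign_ef c d) p \in [:: 2; 3; 4].
  apply: (@teval_mem_ideal _ [:: 0; 1; 2] _ 2 d) => //.
  by rewrite /assign_ef eq_sym (negbTE cd) eqxx.
have Hs : teval T_A01 (assign_ef c d) s \in [:: 1; 3; 4].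
  by apply: (@teval_mem_ideal _ [:: 0; 1; 2] _ 1 c) => //; rewrite /assign_ef eqxx.
move: Hp Hs; rewrite (teval_cat T_A01_ok) !inE.
by case/or3P=> /eqP ->; case/or3P=> /eqP ->.
Qed.

Lemma A01_last_before_first (w : word) (c d : nat) : c != d -> c \in w -> d \in w ->
  (teval T_A01 (assign_ef c d) w = A01_to_nat Aef <-> occ_before w c (count_mem c w - 1) d 0).
Proof.
move=> cd cw dw; split=> [ef|[p [s [E [cp dp]]]]]; last first.
  subst w; move: cp dp; rewrite count_cat => cp dp.
  have dp' : d \notin p by apply/count_memPn; count_lia.
  apply: teval_ef_sep => //.
  - by rewrite -count_mem_gt0; count_lia.
  - by apply/count_memPn; count_lia.
  - by move: dw; rewrite mem_cat (negbTE dp').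
have cw0 := cw; rewrite -count_mem_gt0 in cw0.
apply/(occ_before_neg cd); [count_lia | by rewrite count_mem_gt0 |].
case=> p [s [E [dp cp]]]; move: ef; rewrite E teval_ef_zero //; first by rewrite -count_mem_gt0.
by rewrite -count_mem_gt0; move: cw0 cp; rewrite E count_cat; count_lia.
Qed.

Lemma A01_same_extreme_order (u v : word) (c k d j : nat) : sat (tmonoid T_A01) (u, v) ->
  (forall e, count_mem e u = count_mem e v) -> c != d -> k < count_mem c u -> j < count_mem d u ->
  (k = count_mem c u - 1 /\ j = 0) \/ (k = 0 /\ j = count_mem d u - 1) ->
  (occ_before u c k d j <-> occ_before v c k d j).
Proof.
move=> /(sat_tmonoid T_A01_ok) uv cnt cd ku ju.
have mem (e : nat) (w : word) : 0 < count_mem e w -> e \in w by rewrite count_mem_gt0.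
have cu : c \in u by apply: mem; count_lia.
have du : d \in u by apply: mem; count_lia.
have cv : c \in v by apply: mem; rewrite -cnt; count_lia.
have dv : d \in v by apply: mem; rewrite -cnt; count_lia.
have dc : d != c by rewrite eq_sym.
case=> [[-> ->]|[-> ->]].
  by rewrite -A01_last_before_first // uv A01_last_before_first // cnt.
have neg (w : word) : c \in w -> d \in w ->
    (occ_before w c 0 d (count_mem d w - 1) <-> teval T_A01 (assign_ef d c) w <> A01_to_nat Aef).
  move=> cw dw; rewrite A01_last_before_first // (occ_before_neg cd) ?count_mem_gt0 //.
  by move: dw; rewrite -count_mem_gt0; count_lia.
by rewrite neg // uv -neg // cnt.
Qed.

Lemma occ_before_first (p s : word) (x z k : nat) : z \notin p ->
  (occ_before (p ++ z :: s) x k z 0 <-> k < count_mem x p).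
Proof.
move=> zp; split=> [[p' [s' [E [xp' zp']]]]|xp]; last first.
  by exists p, (z :: s); rewrite (count_memPn zp).
case: (cat_prefix_total E) => [[m Em]|[m Em]]; subst; last by rewrite count_cat; count_lia.
move: E; rewrite -catA => /cat_cancel_l; case: m zp' xp' => [|a m] /=; first by rewrite cats0.
by move=> + _ [az _]; rewrite az count_cat /= eqxx; count_lia.
Qed.

Definition assign_ta (z x : nat) (i : nat) : nat :=
  if i == z then index [:: lt] reps_ata else if i == x then index [:: la] reps_ata else 0.

Lemma T_ata_second_before (w : word) (z x : nat) : z != x ->
  count_mem z w = 1 -> count_mem x w = 3 ->
  (teval T_ata (assign_ta z x) w = tzero T_ata <-> occ_before w x 1 z 0).
Proof.
move=> zx zw xw; have : z \in w by rewrite -count_mem_gt0 zw.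
case/split_first=> p [s [E zp]]; subst w; rewrite occ_before_first //.
move: zw xw; rewrite !count_cat /= eqxx (count_memPn zp) (negbTE zx) => -[/count_memPn zs] xw.
rewrite (teval_cat T_ata_ok) /= {2}/assign_ta eqxx.
rewrite (@teval_eq_in _ _ (fun i => if i == x then 1 else 0) p); last first.
  by move=> i ip; rewrite /assign_ta; case: eqP => // zi; rewrite -zi ip in zp.
rewrite (@teval_eq_in _ _ (fun i => if i == x then 1 else 0) s); last first.
  by move=> i is_; rewrite /assign_ta; case: eqP => // zi; rewrite -zi is_ in zs.
rewrite !teval_indicator ?T_ata_ok //.
have -> : count_mem x s = 3 - count_mem x p by count_lia.
have : count_mem x p < 4 by count_lia.
by case: (count_mem x p) => [|[|[|[|b]]]] // _; vm_compute; split.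
Qed.

(** * Completeness of Sigma1 and Sigma2 *)

Lemma T_A01_Sigma1 : all (sat_checkb T_A01) Sigma1. Proof. by vm_compute. Qed.
Lemma T_apbp_Sigma1 : all (sat_checkb T_apbp) Sigma1. Proof. by vm_compute. Qed.
Lemma T_A01_Sigma2 : all (sat_checkb T_A01) Sigma2. Proof. by vm_compute. Qed.
Lemma T_ata_Sigma2 : all (sat_checkb T_ata) Sigma2. Proof. by vm_compute. Qed.
Lemma T_atab_Sigma2 : all (sat_checkb T_atab) Sigma2. Proof. by vm_compute. Qed.

Lemma sat_all_checkb (F : table) (S : seq identity) : table_ok F -> all (sat_checkb F) S ->
  forall id, id \in S -> sat (tmonoid F) id.
Proof. by move=> okF /allP SF id /SF; apply: sat_of_checkb. Qed.

Lemma sat_deriv_congr (N : mstruct) (S : seq identity) (u v u' v' : word) : is_monoid N ->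
  (forall id, id \in S -> sat N id) -> deriv S u u' -> deriv S v v' ->
  sat N (u, v) -> sat N (u', v').
Proof.
move=> monN satS uu' vv' uv; have u'u := sat_sym monN (sat_deriv monN satS uu').
exact: (sat_trans monN u'u (sat_trans monN uv (sat_deriv monN satS vv'))).
Qed.

Lemma Sigma1_complete (u v : word) : sat (tmonoid T_A01) (u, v) -> deriv Sigma1 u v.
Proof.
move=> uv; have [u' [Du cu]] := Sigma1_normal_form u; have [v' [Dv cv]] := Sigma1_normal_form v.
have satS := sat_all_checkb T_A01_ok T_A01_Sigma1.
have uv' := sat_deriv_congr (tmonoid_monoid T_A01_ok) satS Du Dv uv.
have cnt e : count_mem e u' = count_mem e v' by rewrite cu cv (A01_sat_count uv).
apply: deriv_trans Du (deriv_trans _ (deriv_sym Dv)).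
apply/(deriv_free_swaps Sigma1_free_swap)/free_swaps_same_fixed_order => // c k d j cd ku ju.
move=> /(not_free_pair cd) [nf1 nf2]; apply: A01_same_extreme_order => //.
have := cu c; have := cu d; rewrite /minn; case: ifP; case: ifP; count_lia.
Qed.

Lemma Sigma2_complete (u v : word) :
  sat (tmonoid T_A01) (u, v) -> sat (tmonoid T_ata) (u, v) -> deriv Sigma2 u v.
Proof.
move=> uv uv_ata.
have [u' [Du cu]] := Sigma2_normal_form u; have [v' [Dv cv]] := Sigma2_normal_form v.
have uv' := sat_deriv_congr (tmonoid_monoid T_A01_ok)
  (sat_all_checkb T_A01_ok T_A01_Sigma2) Du Dv uv.
have uv'_ata := sat_deriv_congr (tmonoid_monoid T_ata_ok)
  (sat_all_checkb T_ata_ok T_ata_Sigma2) Du Dv uv_ata.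
have cnt e : count_mem e u' = count_mem e v'.
  have := A01_sat_count uv e; rewrite cu cv.
  by case: (count_mem e u) => [|[|n]]; case: (count_mem e v) => [|[|m]].
have cnt013 e : count_mem e u' \in [:: 0; 1; 3].
  by rewrite cu; case: (count_mem e u) => [|[|n]].
have ata_same z x : z != x -> count_mem z u' = 1 -> count_mem x u' = 3 ->
    (occ_before u' x 1 z 0 <-> occ_before v' x 1 z 0).
  move=> zx z1 x3; rewrite -T_ata_second_before // ((sat_tmonoid T_ata_ok _ _).1 uv'_ata).
  by rewrite T_ata_second_before // -cnt.
apply: deriv_trans Du (deriv_trans _ (deriv_sym Dv)).
apply/(deriv_free_swaps Sigma2_free_swap)/free_swaps_same_fixed_order => // c k d j cd ku ju.
move=> /(not_free_pair cd) [nf1 nf2]; have dc : d != c by rewrite eq_sym.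
have := cnt013 c; have := cnt013 d; rewrite !inE.
case/or3P=> /eqP dn; case/or3P=> /eqP cn; try by apply: A01_same_extreme_order => //; count_lia.
(* Left: a letter occurring once against the middle one of a letter occurring thrice. *)
- have [k0|[k1|k2]] : k = 0 \/ k = 1 \/ k = 2 by count_lia.
  + by apply: A01_same_extreme_order => //; count_lia.
  + by rewrite k1 (_ : j = 0) ?ata_same //; count_lia.
  + by apply: A01_same_extreme_order => //; count_lia.
- have [j0|[j1|j2]] : j = 0 \/ j = 1 \/ j = 2 by count_lia.
  + by apply: A01_same_extreme_order => //; count_lia.
  + have k0 : k = 0 by count_lia.
    rewrite j1 k0 (occ_before_neg cd) ?cn ?dn // (occ_before_neg cd) -?cnt ?cn ?dn //.
    by rewrite ata_same.
  + by apply: A01_same_extreme_order => //; count_lia.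
Qed.

(** * The varieties *)

Lemma T_A01_in_apbp : table_emb T_A01 T_apbp (nth 9 [:: 0; 2; 4; 8; 9]).
Proof. by vm_compute. Qed.
Lemma T_A01_in_atab : table_emb T_A01 T_atab (nth 20 [:: 0; 2; 9; 13; 20]).
Proof. by vm_compute. Qed.
Lemma T_ata_in_atab : table_emb T_ata T_atab (nth 20 [:: 0; 1; 2; 3; 4; 5; 6; 7; 20]).
Proof. by vm_compute. Qed.

Lemma var_defined_by_complete (M : mstruct) (S : seq identity) :
  (forall id, id \in S -> sat M id) -> (forall u v, sat M (u, v) -> deriv S u v) ->
  var_defined_by M S.
Proof.
move=> satS complete N monN; split=> [MN id /satS /MN //|NS [u v] /complete D].
exact (sat_deriv monN NS D).
Qed.

Lemma sat_atab_A01_ata (u v : word) : sat (Mtau lam W_atab) (u, v) ->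
  sat (tmonoid T_A01) (u, v) /\ sat (tmonoid T_ata) (u, v).
Proof.
move/sat_Mlam_atab=> uv; split.
  exact (sat_table_emb T_A01_ok T_atab_ok T_A01_in_atab uv).
exact (sat_table_emb T_ata_ok T_atab_ok T_ata_in_atab uv).
Qed.

Lemma same_var_A01_Mtau1_apbp : same_var A01M (Mtau tau1 W_apbp_tau1).
Proof. by move=> id; rewrite sat_A01_table sat_Mtau1_apbp. Qed.

Lemma same_var_A01_Mlam_apbp : same_var A01M (Mtau lam W_apbp_lam).
Proof.
move=> [u v]; rewrite sat_Mlam_apbp sat_A01_table; split=> uv.
  exact (sat_deriv (tmonoid_monoid T_apbp_ok) (sat_all_checkb T_apbp_ok T_apbp_Sigma1)
    (Sigma1_complete uv)).
exact (sat_table_emb T_A01_ok T_apbp_ok T_A01_in_apbp uv).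
Qed.

Lemma A01_var_defined_by_Sigma1 : var_defined_by A01M Sigma1.
Proof.
apply: var_defined_by_complete => [id|u v /sat_A01_table]; last exact: Sigma1_complete.
by move/(sat_all_checkb T_A01_ok T_A01_Sigma1)/sat_A01_table.
Qed.

Lemma Mlam_atab_join : var_is_join (Mtau lam W_atab) A01M (Mtau lam W_ata).
Proof.
move=> [u v]; rewrite sat_A01_table sat_Mlam_ata.
split=> [/sat_atab_A01_ata //|[uv uv_ata]]; apply/sat_Mlam_atab.
exact (sat_deriv (tmonoid_monoid T_atab_ok) (sat_all_checkb T_atab_ok T_atab_Sigma2)
  (Sigma2_complete uv uv_ata)).
Qed.

Lemma Mlam_atab_var_defined_by_Sigma2 : var_defined_by (Mtau lam W_atab) Sigma2.
Proof.
apply: var_defined_by_complete => [id|u v /sat_atab_A01_ata [uv uv_ata]].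
  by move/(sat_all_checkb T_atab_ok T_atab_Sigma2)/sat_Mlam_atab.
exact: Sigma2_complete.
Qed.

Theorem lemma6p3 :
  (* (i) *)
  (same_var A01M (Mtau tau1 W_apbp_tau1) /\
   same_var A01M (Mtau lam W_apbp_lam) /\
   var_defined_by A01M Sigma1) /\
  (* (ii) *)
  (var_is_join (Mtau lam W_atab) A01M (Mtau lam W_ata) /\
   var_defined_by (Mtau lam W_atab) Sigma2).
Proof.
split; [split; [|split] | split].
- exact: same_var_A01_Mtau1_apbp.
- exact: same_var_A01_Mlam_apbp.
- exact: A01_var_defined_by_Sigma1.
- exact: Mlam_atab_join.
- exact: Mlam_atab_var_defined_by_Sigma2.
Qed.
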